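(* Let $p \geqslant 7$ be a prime and let $V$ be a $1$-dimensional vector space over $\mathbb{F}_p$. Let $G = \mathrm{Sym}(V)$, let $H = \mathrm{AGL}(V)$, and let $T$ be the group of diagonal matrices in $\mathrm{GL}(V)$ (here $T = \mathrm{GL}(V)$). Then there exists $x \in G$ such that $H \cap H^x = T$.
   Context: $\mathrm{AGL}(V)$ is the group of invertible affine transformations $\mathbf{v} \mapsto \mathbf{v}g + \mathbf{u}$ ($g \in \mathrm{GL}(V)$, $\mathbf{u} \in V$) of $V$, regarded as a subgroup of $\mathrm{Sym}(V)$. *)

From mathcomp Require Import all_boot all_order all_algebra all_fingroup.
Set Implicit Arguments. Unset Strict Implicit. Unset Printing Implicit Defensive.
Import GRing.Theory.
Local Open Scope ring_scope.

(* V = 'rV['F_p]_1, the 1-dimensional row space over F_p; linear maps act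
   on the right on row vectors: v |-> v *m g. *)
Notation Vp p := 'rV['F_p]_1.

Definition AGL (p : nat) : {set {perm Vp p}} :=
  [set s : {perm Vp p} | [exists g : 'M['F_p]_1, exists u : Vp p,
      (g \in unitmx) && [forall v : Vp p, s v == v *m g + u]]].

Definition diagT (p : nat) : {set {perm Vp p}} :=
  [set s : {perm Vp p} | [exists g : 'M['F_p]_1,
      [&& is_diag_mx g, g \in unitmx & [forall v : Vp p, s v == v *m g]]]].

From mathcomp Require Import all_boot all_order all_algebra all_fingroup.
From mathcomp Require Import ring.
Set Implicit Arguments. Unset Strict Implicit. Unset Printing Implicit Defensive.
Import GRing.Theory.

(* Take x to be the inversion t |-> t^-1 of F_p (with 0 |-> 0).  Linear maps
   t |-> a t are conjugated by x into t |-> a^-1 t, so T lies in H :&: H^x.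
   Conversely, if s t = a t + b and t |-> (a t^-1 + b)^-1 equals c t + d,
   then evaluating at t = 0 gives d = b^-1; if b != 0, adding the identities
   at t = 1/u and t = -1/u, for u = 1 or u = 2 chosen with a u +- b != 0,
   gives 2ac = 0.  This is absurd in characteristic other than 2 and 3,
   hence b = 0 and s is linear. *)

Local Open Scope ring_scope.

Lemma inv_conj_affine_const_eq0 (F : fieldType) (a b c d : F) :
  (2 : F) != 0 -> (3 : F) != 0 -> a != 0 -> c != 0 ->
  (forall t, (a * t^-1 + b)^-1 = c * t + d) -> b = 0.
Proof.
move=> nz2 nz3 a0 c0 conj_affine; apply/eqP/contraT => b0.
have d_def : d = b^-1.
  by have := conj_affine 0; rewrite invr0 !mulr0 !add0r.
have at_inv w : a * w + b != 0 -> (a * w + b) * (c * w^-1 + b^-1) = 1.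
  by move=> nzw; rewrite -d_def -conj_affine invrK mulfV.
have [u u0 nz_sq] : exists2 u : F, u != 0 & (a * u) ^+ 2 != b ^+ 2.
  have [sq1|] := eqVneq ((a * 1) ^+ 2) (b ^+ 2); last by exists 1; rewrite ?oner_eq0.
  exists 2 => //; rewrite -sq1 -subr_eq0.
  have -> : (a * 2) ^+ 2 - (a * 1) ^+ 2 = 3 * a ^+ 2 by ring.
  by rewrite mulf_neq0 ?expf_neq0.
have : (a * u + b) * (a * - u + b) != 0.
  have -> : (a * u + b) * (a * - u + b) = b ^+ 2 - (a * u) ^+ 2 by ring.
  by rewrite subr_eq0 eq_sym.
rewrite mulf_eq0 negb_or => /andP[/at_inv at_u /at_inv]; rewrite invrN => at_Nu.
(* The terms odd in u cancel in the sum of the two identities. *)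
have : 2 * a * c * (u * u^-1) + 2 * (b * b^-1) = 1 + 1.
  by rewrite -[X in _ = X + _]at_u -[X in _ = _ + X]at_Nu; ring.
rewrite !mulfV // !mulr1 => sum_eq.
have /eqP : 2 * a * c = 0 by apply: (addIr 2); rewrite sum_eq add0r.
by rewrite !mulf_eq0 (negPf nz2) (negPf a0) (negPf c0).
Qed.

Lemma Fp_natr_neq0 (p n : nat) : prime p -> (0 < n < p)%N -> (n%:R : 'F_p) != 0.
Proof.
move=> p_pr /andP[n_gt0 n_ltp]; rewrite -(dvdn_pcharf (pchar_Fp p_pr)).
by apply: contraTN n_ltp => /(dvdn_leq n_gt0); rewrite leqNgt.
Qed.

Lemma scalar_mx11E (R : pzRingType) (a : R) : (a%:M : 'M[R]_1) 0 0 = a.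
Proof. by rewrite mxE eqxx mulr1n. Qed.

Lemma unitmx11E (F : fieldType) (g : 'M[F]_1) : (g \in unitmx) = (g 0 0 != 0).
Proof. by rewrite unitmxE det_mx11 unitfE. Qed.

Lemma mulmx11E (R : comPzRingType) (v g : 'M[R]_1) : (v *m g) 0 0 = g 0 0 * v 0 0.
Proof. by rewrite !mxE big_ord1 mulrC. Qed.

Lemma mulmx11_scalar (R : comPzRingType) (v : 'M[R]_1) (a : R) :
  v *m a%:M = (a * v 0 0)%:M.
Proof.
by rewrite mul_mx_scalar; apply/matrixP => i j; rewrite !ord1 !mxE eqxx mulr1n mulrC.
Qed.

Section InversionPerm.

Variable F : finFieldType.

Definition inv_rV1 (v : 'rV[F]_1) : 'rV[F]_1 := map_mx GRing.inv v.

Lemma inv_rV1K : involutive inv_rV1.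
Proof. by move=> v; apply/matrixP => i j; rewrite !mxE invrK. Qed.

Definition inv_perm : {perm 'rV[F]_1} := perm (inv_inj inv_rV1K).

Lemma inv_permE v : inv_perm v 0 0 = (v 0 0)^-1.
Proof. by rewrite permE mxE. Qed.

Lemma inv_permV : (inv_perm^-1)%g = inv_perm.
Proof.
apply/eqP; rewrite eq_invg_mul; apply/eqP/permP => v.
by rewrite permM !permE inv_rV1K.
Qed.

Lemma conjg_inv_permE (s : {perm 'rV[F]_1}) v :
  (s ^ inv_perm)%g v 0 0 = (s (inv_perm v) 0 0)^-1.
Proof. by rewrite /conjg inv_permV !permM inv_permE. Qed.

End InversionPerm.

Section AffineGroupOfFp.

Variable p : nat.
Local Notation F := 'F_p.

Lemma AGLP (s : {perm 'rV[F]_1}) :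
  reflect (exists a b : F, a != 0 /\ forall v, s v 0 0 = a * v 0 0 + b)
          (s \in AGL p).
Proof.
rewrite inE; apply: (iffP existsP).
  case=> g /existsP[u /andP[gu /forallP s_affine]].
  exists (g 0 0), (u 0 0); split; first by rewrite -unitmx11E.
  by move=> v; rewrite (eqP (s_affine v)) mxE mulmx11E.
case=> a [b [a0 s_affine]]; exists a%:M; apply/existsP; exists b%:M.
rewrite unitmx11E scalar_mx11E a0; apply/forallP => v.
by rewrite (mx11_scalar (s v)) s_affine mulmx11_scalar raddfD.
Qed.

Lemma diagTP (s : {perm 'rV[F]_1}) :
  reflect (exists a : F, a != 0 /\ forall v, s v 0 0 = a * v 0 0)
          (s \in diagT p).
Proof.
rewrite inE; apply: (iffP existsP).
  case=> g /and3P[_ gu /forallP s_lin].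
  exists (g 0 0); split; first by rewrite -unitmx11E.
  by move=> v; rewrite (eqP (s_lin v)) mulmx11E.
case=> a [a0 s_lin]; exists a%:M.
rewrite mx11_is_diag unitmx11E scalar_mx11E a0; apply/forallP => v.
by rewrite (mx11_scalar (s v)) s_lin mulmx11_scalar.
Qed.

Lemma AGL_conj_inv_perm (s : {perm 'rV[F]_1}) :
  (2 : F) != 0 -> (3 : F) != 0 ->
  (s \in AGL p :&: AGL p :^ inv_perm F)%g = (s \in diagT p).
Proof.
move=> nz2 nz3; rewrite inE mem_conjg inv_permV.
apply/andP/diagTP.
  case=> /AGLP[a [b [a0 s_affine]]] /AGLP[c [d [c0 conj_affine]]].
  suff b0 : b = 0 by exists a; split=> // v; rewrite s_affine b0 addr0.
  apply: (inv_conj_affine_const_eq0 (d := d) nz2 nz3 a0 c0) => t.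
  by have := conj_affine t%:M; rewrite conjg_inv_permE s_affine inv_permE !scalar_mx11E.
case=> a [a0 s_lin]; split; apply/AGLP.
  by exists a, 0; split=> // v; rewrite s_lin addr0.
exists a^-1, 0; split; first by rewrite invr_eq0.
by move=> v; rewrite conjg_inv_permE s_lin inv_permE addr0 invfM invrK mulrC.
Qed.

End AffineGroupOfFp.

Local Close Scope ring_scope.

Theorem lemma3p2 (p : nat) (hp : prime p) (hp7 : 7 <= p) :
  exists x : {perm 'rV['F_p]_1}, (AGL p :&: (AGL p :^ x))%g = diagT p.
Proof.
have nz2 : (2 != 0 :> 'F_p)%R by apply: Fp_natr_neq0; rewrite //= (leq_trans _ hp7).
have nz3 : (3 != 0 :> 'F_p)%R by apply: Fp_natr_neq0; rewrite //= (leq_trans _ hp7).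
by exists (inv_perm _); apply/setP => s; rewrite AGL_conj_inv_perm.
Qed.
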